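(* Let $\gamma:[0,1]\to\mathbb{R}^2$ be a $C^1$ curve with constant speed $c>0$ with $\gamma(0)=(0,0)$ and $\gamma'(0)=(c,0)$, and let $\theta$ be a turning angle function for $\gamma$ with $\theta(0)\in 2\pi\mathbb{Z}$. If $|\theta(1)-\theta(0)|\ge 2\pi$ and \[\|\gamma(1)\|\ge\sqrt{2\big(1-\cos\theta(1)\big)}\,\max_{s\in[0,1]}\|\gamma(s)\|,\] then there exist cuts $0\le c_1\le c_2\le 1$ such that $r_{(c_1,c_2)}(0)=r_{(c_1,c_2)}(1)$ (the rearranged curve is closed, not necessarily smooth at the end point).
   Context: A turning angle function for $\gamma$ is a continuous function $\theta$ with $\gamma'(s)=c(\cos\theta(s),\sin\theta(s))$. Concatenation: if $\alpha$ on $[a_1,b_1]$ and $\beta$ on $[a_2,b_2]$ are $C^1$ planar curves with the same constant speed, $\alpha*\beta$ is the curve on $[0,(b_1-a_1)+(b_2-a_2)]$ that equals $\alpha(s+a_1)$ for $s\le b_1-a_1$ and equals $T(\beta(s-(b_1-a_1)+a_2))$ afterwards, where $T$ is the orientation-preserving rigid motion of $\mathbb{R}^2$ sending $\beta(a_2)$ to $\alpha(b_1)$ and the unit tangent $\beta'(a_2)/c$ to $\alpha'(b_1)/c$. For cuts $0\le c_1\le c_2\le 1$, let $\gamma_1,\gamma_2,\gamma_3$ be the restrictions of $\gamma$ to $[0,c_1]$, $[c_1,c_2]$, $[c_2,1]$ (an arc of length zero is a point carrying the tangent direction of $\gamma$ there). The rearranged curve is $r_{(c_1,c_2)}:=\gamma_1*\gamma_3*\gamma_2:[0,1]\to\mathbb{R}^2$.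 Throughout this setting the paper normalizes $\gamma(0)=(0,0)$ and the initial tangent along the positive $x$-axis. *)

From Stdlib Require Import Reals Lra ZArith.
Open Scope R_scope.

Definition vec := (R * R)%type.

Definition vnorm (p : vec) : R := sqrt (fst p * fst p + snd p * snd p).

Definition vadd (p q : vec) : vec := (fst p + fst q, snd p + snd q).
Definition vsub (p q : vec) : vec := (fst p - fst q, snd p - snd q).
Definition vscale (k : R) (p : vec) : vec := (k * fst p, k * snd p).

Definition inI (a b s : R) : Prop := a <= s <= b.

Definition cont_on (a b : R) (f : R -> R) : Prop :=
  forall s, inI a b s -> forall eps, 0 < eps -> exists delta, 0 < delta /\
    forall t, inI a b t -> Rabs (t - s) < delta -> Rabs (f t - f s) < eps.

Definition deriv_on (a b : R) (f df : R -> R) : Prop :=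
  forall s, inI a b s -> forall eps, 0 < eps -> exists delta, 0 < delta /\
    forall t, inI a b t -> 0 < Rabs (t - s) < delta ->
      Rabs ((f t - f s) / (t - s) - df s) < eps.

Definition C1_curve_on (a b : R) (g dg : R -> vec) : Prop :=
  deriv_on a b (fun s => fst (g s)) (fun s => fst (dg s)) /\
  deriv_on a b (fun s => snd (g s)) (fun s => snd (dg s)) /\
  cont_on a b (fun s => fst (dg s)) /\ cont_on a b (fun s => snd (dg s)).

Definition turning_angle (a b c : R) (dg : R -> vec) (theta : R -> R) : Prop :=
  cont_on a b theta /\
  forall s, inI a b s -> dg s = (c * cos (theta s), c * sin (theta s)).

(* A parametrized arc: position, tangent (derivative), parameter interval. *)
Record arc := mkArc { apos : R -> vec; atan_ : R -> vec; lo : R; hi : R }.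

(* rotation by the angle sending unit vector u to unit vector v *)
Definition rot (u v : vec) (x : vec) : vec :=
  let cs := fst u * fst v + snd u * snd v in
  let sn := fst u * snd v - snd u * fst v in
  (cs * fst x - sn * snd x, sn * fst x + cs * snd x).

(* concatenation alpha * beta for curves of common constant speed c:
   beta is moved by the orientation preserving rigid motion T sending
   beta(a2) to alpha(b1) and the unit tangent beta'(a2)/c to alpha'(b1)/c. *)
Definition concat (c : R) (al be : arc) : arc :=
  let L1 := hi al - lo al in
  let L2 := hi be - lo be in
  let u := vscale (/ c) (atan_ be (lo be)) in
  let v := vscale (/ c) (atan_ al (hi al)) in
  let T := fun p => vadd (apos al (hi al)) (rot u v (vsub p (apos be (lo be)))) in
  mkArc
    (fun s => if Rle_dec s L1 then apos al (s + lo al)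
              else T (apos be (s - L1 + lo be)))
    (fun s => if Rle_dec s L1 then atan_ al (s + lo al)
              else rot u v (atan_ be (s - L1 + lo be)))
    0 (L1 + L2).

(* restriction of gamma (with derivative dgamma) to [a,b]; when a = b this is
   a point carrying the tangent direction of gamma there *)
Definition restr (g dg : R -> vec) (a b : R) : arc := mkArc g dg a b.

Definition rearranged (c : R) (g dg : R -> vec) (c1 c2 : R) : arc :=
  concat c (concat c (restr g dg 0 c1) (restr g dg c2 1)) (restr g dg c1 c2).

(* Identify the plane with C and put e(s) = cis (theta s).  Since dg = c e, a direct computation
   gives e(b) r_(a,b)(1) = F(a,b) := e(b) g(a) + e(a) (g(1) - g(b)) + e(1) (g(b) - g(a)), so it
   suffices to find a <= b with F(a,b) = 0; for g(1) = 0 take a = b = 0.  Otherwise look at the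
   paths t |-> F(a, a + t (1 - a)), a in [0,1], running from e(a) g(1) to e(1) g(1).  If none of
   them met 0, their winding angles (sums of principal arguments along a fine sampling) would
   depend continuously on a and be congruent to theta(1) - theta(a) mod 2 pi, hence differ from it
   by a constant.  The path at a = 1 is constant, so the constant is 0.  The path at a = 0 is
   g(1) - (1 - e(1)) g(t) and |1 - e(1)| = sqrt (2 (1 - cos theta(1))), so by hypothesis it stays
   in the closed disc of centre g(1) through 0; its winding angle is therefore less than pi,
   contradicting |theta(1) - theta(0)| >= 2 pi. *)

From Stdlib Require Import Reals Lra Lia ZArith Classical ClassicalEpsilon.
From Coquelicot Require Import Coquelicot.
Open Scope R_scope.

(** * Arguments of complex numbers *)

Definition cis (t : R) : C := (cos t, sin t).

Definition is_arg (w : C) (al : R) : Prop := w = (Cmod w * cos al, Cmod w * sin al).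

Definition arg_rhp (w : C) : R := atan (snd w / fst w).

Lemma Cmod_pair x y : Cmod (x, y) = sqrt (x * x + y * y).
Proof. unfold Cmod; simpl; f_equal; ring. Qed.

Lemma Cmod_sqr (z : C) : Cmod z * Cmod z = fst z * fst z + snd z * snd z.
Proof. destruct z as [x y]; rewrite Cmod_pair; simpl; apply sqrt_sqrt; nra. Qed.

Lemma Cmult_Cconj_r (z : C) : (z * Cconj z)%C = RtoC (Cmod z * Cmod z).
Proof. rewrite Cmod_sqr; destruct z as [x y]; unfold Cmult, Cconj, RtoC; simpl; f_equal; ring. Qed.

Lemma Cmod_RtoC_pos r : 0 <= r -> Cmod (RtoC r) = r.
Proof. intros Hr; rewrite Cmod_R; apply Rabs_pos_eq, Hr. Qed.

Lemma Cmod_triangle_inv (x y : C) : Rabs (Cmod x - Cmod y) <= Cmod (x - y)%C.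
Proof.
  assert (H1 := Cmod_triangle (x - y)%C y); assert (H2 := Cmod_triangle (y - x)%C x).
  replace (x - y + y)%C with x in H1 by ring; replace (y - x + x)%C with y in H2 by ring.
  replace (y - x)%C with (- (x - y))%C in H2 by ring; rewrite Cmod_opp in H2.
  apply Rabs_le; lra.
Qed.

Lemma Cmod_le_Rabs_sum (z : C) : Cmod z <= Rabs (fst z) + Rabs (snd z).
Proof.
  destruct z as [x y]; rewrite Cmod_pair; simpl.
  assert (Hx := Rabs_pos x); assert (Hy := Rabs_pos y).
  rewrite <- (sqrt_square (Rabs x + Rabs y)) by lra.
  apply sqrt_le_1_alt.
  assert (Ex : x * x = Rabs x * Rabs x) by (rewrite <- Rabs_mult; symmetry; apply Rabs_pos_eq; nra).
  assert (Ey : y * y = Rabs y * Rabs y) by (rewrite <- Rabs_mult; symmetry; apply Rabs_pos_eq; nra).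
  nra.
Qed.

Lemma Cmod_cis t : Cmod (cis t) = 1.
Proof.
  unfold cis; rewrite Cmod_pair. assert (H := sin2_cos2 t). unfold Rsqr in H.
  replace (cos t * cos t + sin t * sin t) with 1 by lra. apply sqrt_1.
Qed.

Lemma cis_Cconj_r t : (cis t * Cconj (cis t))%C = 1%C.
Proof. rewrite Cmult_Cconj_r, Cmod_cis, Rmult_1_l; reflexivity. Qed.

Lemma cis_2PI_mult k : cis (2 * PI * IZR k) = 1%C.
Proof.
  assert (Hnat : forall n, cis (2 * PI * INR n) = 1%C).
  { intros n; unfold cis; rewrite <- (Rplus_0_l (2 * PI * INR n)).
    replace (0 + 2 * PI * INR n) with (0 + 2 * INR n * PI) by ring.
    rewrite cos_period, sin_period, cos_0, sin_0; reflexivity. }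
  destruct (Z_le_gt_dec 0 k) as [Hk|Hk].
  - rewrite <- (Z2Nat.id k), <- INR_IZR_INZ by exact Hk; apply Hnat.
  - assert (E := Hnat (Z.to_nat (- k))).
    rewrite INR_IZR_INZ, Z2Nat.id, opp_IZR in E by lia.
    unfold cis in *; injection E; intros Es Ec.
    replace (2 * PI * - IZR k) with (- (2 * PI * IZR k)) in Es, Ec by ring.
    rewrite cos_neg in Ec; rewrite sin_neg in Es; unfold RtoC; f_equal; lra.
Qed.

Lemma Cmod_1_minus_cis t : Cmod (1 - cis t)%C = sqrt (2 * (1 - cos t)).
Proof.
  unfold cis, Cminus, Cplus, Copp, RtoC; rewrite Cmod_pair; simpl; f_equal.
  assert (H := sin2_cos2 t); unfold Rsqr in H; nra.
Qed.

Lemma is_arg_cis t : is_arg (cis t) t.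
Proof. unfold is_arg; rewrite Cmod_cis; unfold cis; f_equal; ring. Qed.

Lemma is_arg_real_pos r : 0 <= r -> is_arg (RtoC r) 0.
Proof.
  intros Hr; unfold is_arg; rewrite Cmod_RtoC_pos, cos_0, sin_0 by exact Hr.
  unfold RtoC; f_equal; ring.
Qed.

Lemma is_arg_mult z w a b : is_arg z a -> is_arg w b -> is_arg (z * w)%C (a + b).
Proof.
  unfold is_arg; intros Hz Hw; rewrite Cmod_mult.
  destruct z as [zx zy], w as [wx wy].
  set (rz := Cmod (zx, zy)) in *; set (rw := Cmod (wx, wy)) in *; clearbody rz rw.
  injection Hz; injection Hw; intros; subst.
  unfold Cmult; simpl; rewrite cos_plus, sin_plus; f_equal; ring.
Qed.

Lemma is_arg_conj z a : is_arg z a -> is_arg (Cconj z) (- a).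
Proof.
  unfold is_arg; intros Hz; rewrite Cmod_conj.
  destruct z as [zx zy]; set (rz := Cmod (zx, zy)) in *; clearbody rz.
  injection Hz; intros; subst; unfold Cconj; simpl; rewrite cos_neg, sin_neg; f_equal; ring.
Qed.

Lemma is_arg_scal_pos r z a : 0 < r -> is_arg (RtoC r * z)%C a <-> is_arg z a.
Proof.
  intros Hr; unfold is_arg; rewrite Cmod_mult, Cmod_RtoC_pos by lra.
  destruct z as [zx zy]; set (rz := Cmod (zx, zy)); clearbody rz.
  unfold Cmult, RtoC; simpl; split; intros E; injection E; intros E1 E2.
  - f_equal; apply (Rmult_eq_reg_l r); nra.
  - rewrite E1, E2; f_equal; ring.
Qed.

Lemma is_arg_cos_diff (w : C) (a b : R) : w <> 0%C -> is_arg w a -> is_arg w b -> cos (a - b) = 1.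
Proof.
  unfold is_arg; intros Hw Ha Hb.
  assert (Hm : 0 < Cmod w) by (apply Cmod_gt_0, Hw).
  assert (Hm2 := Cmod_sqr w).
  set (m := Cmod w) in *; clearbody m.
  destruct w as [x y]; injection Ha; injection Hb; intros; simpl in Hm2.
  rewrite cos_minus; apply (Rmult_eq_reg_l (m * m)); [|nra].
  assert (Hsa := sin2_cos2 a); assert (Hsb := sin2_cos2 b); unfold Rsqr in *.
  nra.
Qed.

Lemma cos_eq_1_small x : - (2 * PI) < x < 2 * PI -> cos x = 1 -> x = 0.
Proof.
  intros Hx Hc.
  assert (Hs : sin x = 0).
  { assert (H := sin2_cos2 x); rewrite Hc in H; unfold Rsqr in H; nra. }
  destruct (sin_eq_0_0 x Hs) as [k ->].
  assert (HPI := PI_RGT_0).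
  assert (Hk : k = (-1)%Z \/ k = 0%Z \/ k = 1%Z).
  { assert (H : -2 < IZR k < 2) by (split; nra).
    destruct H as [H1 H2]; apply lt_IZR in H1, H2; lia. }
  destruct Hk as [-> | [-> | ->]]; simpl in Hc.
  - replace (-1 * PI) with (- PI) in Hc by ring; rewrite cos_neg, cos_PI in Hc; lra.
  - ring.
  - rewrite Rmult_1_l, cos_PI in Hc; lra.
Qed.

Lemma is_arg_arg_rhp (w : C) : 0 < fst w -> is_arg w (arg_rhp w).
Proof.
  destruct w as [x y]; simpl; intros Hx; unfold is_arg, arg_rhp; simpl.
  rewrite cos_atan, sin_atan, Cmod_pair.
  set (r := y / x).
  assert (E : x * x + y * y = (x * x) * (1 + r²)) by (unfold r, Rsqr; field; lra).
  assert (Hr : 0 < 1 + r²) by (unfold Rsqr; nra).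
  rewrite E, sqrt_mult, sqrt_square by (unfold Rsqr in *; nra).
  assert (Hs : 0 < sqrt (1 + r²)) by (apply sqrt_lt_R0, Hr).
  unfold r in *; f_equal; field; try split; lra.
Qed.

Lemma arg_rhp_bound (w : C) : - (PI / 2) < arg_rhp w < PI / 2.
Proof. destruct (atan_bound (snd w / fst w)); unfold arg_rhp; lra. Qed.

Lemma Re_mult_Cconj_pos_of_disc (z u : C) :
  Cmod (z - u)%C <= Cmod u -> z <> 0%C -> 0 < fst (z * Cconj u)%C.
Proof.
  intros Hd Hz.
  assert (Hz' : 0 < Cmod z) by (apply Cmod_gt_0, Hz).
  assert (Hd2 : Cmod (z - u)%C * Cmod (z - u)%C <= Cmod u * Cmod u)
    by (apply Rmult_le_compat; auto using Cmod_ge_0).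
  assert (Hz2 := Cmod_sqr z); rewrite !Cmod_sqr in Hd2.
  destruct z, u; simpl in *; nra.
Qed.

Lemma arg_rhp_mult_Cconj (u z w : C) :
  0 < fst (z * Cconj u)%C -> 0 < fst (w * Cconj u)%C -> 0 < fst (w * Cconj z)%C ->
  arg_rhp (w * Cconj z)%C = arg_rhp (w * Cconj u)%C - arg_rhp (z * Cconj u)%C.
Proof.
  intros Hzu Hwu Hwz.
  assert (Hu : 0 < Cmod u).
  { apply Cmod_gt_0; intros ->; destruct z; simpl in Hzu; lra. }
  assert (Hdiff : is_arg (w * Cconj z)%C (arg_rhp (w * Cconj u)%C - arg_rhp (z * Cconj u)%C)).
  { apply (is_arg_scal_pos (Cmod u * Cmod u)); [nra|].
    replace (RtoC (Cmod u * Cmod u) * (w * Cconj z))%C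
      with ((w * Cconj u) * Cconj (z * Cconj u))%C
      by (rewrite Cmult_conj, Cconj_conj, <- Cmult_Cconj_r; ring).
    apply is_arg_mult, is_arg_conj; apply is_arg_arg_rhp; assumption. }
  assert (Hnz : (w * Cconj z)%C <> 0%C) by (intros E; rewrite E in Hwz; simpl in Hwz; lra).
  apply Rminus_diag_uniq, cos_eq_1_small;
    [| exact (is_arg_cos_diff _ _ _ Hnz (is_arg_arg_rhp _ Hwz) Hdiff)].
  assert (B1 := arg_rhp_bound (w * Cconj z)); assert (B2 := arg_rhp_bound (w * Cconj u)).
  assert (B3 := arg_rhp_bound (z * Cconj u)); assert (HPI := PI_RGT_0); lra.
Qed.

(** * Discrete winding angle *)

Fixpoint winding (z : nat -> C) (n : nat) : R :=
  match n with
  | O => 0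
  | S k => winding z k + arg_rhp (z (S k) * Cconj (z k))%C
  end.

Lemma winding_is_arg (z : nat -> C) (n : nat) :
  (forall i, (i < n)%nat -> 0 < fst (z (S i) * Cconj (z i))%C) ->
  is_arg (z n * Cconj (z O))%C (winding z n).
Proof.
  induction n as [|n IH]; intros Hstep; simpl.
  - rewrite Cmult_Cconj_r; apply is_arg_real_pos.
    assert (H := Cmod_ge_0 (z O)); nra.
  - assert (Hn := Hstep n (Nat.lt_succ_diag_r n)).
    assert (Hz : 0 < Cmod (z n)).
    { apply Cmod_gt_0; intros E; rewrite E in Hn; destruct (z (S n)); simpl in Hn; lra. }
    apply (is_arg_scal_pos (Cmod (z n) * Cmod (z n))); [nra|].
    replace (RtoC (Cmod (z n) * Cmod (z n)) * (z (S n) * Cconj (z O)))%C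
      with ((z n * Cconj (z O)) * (z (S n) * Cconj (z n)))%C
      by (rewrite <- Cmult_Cconj_r; ring).
    apply is_arg_mult; [apply IH; intros i Hi; apply Hstep; lia | apply is_arg_arg_rhp, Hn].
Qed.

Lemma winding_in_half_plane (u : C) (z : nat -> C) (n : nat) :
  (forall i, (i <= n)%nat -> 0 < fst (z i * Cconj u)%C) ->
  (forall i, (i < n)%nat -> 0 < fst (z (S i) * Cconj (z i))%C) ->
  winding z n = arg_rhp (z n * Cconj u)%C - arg_rhp (z O * Cconj u)%C.
Proof.
  induction n as [|n IH]; intros Hu Hstep; simpl; [ring|].
  rewrite IH by (intros; first [apply Hu | apply Hstep]; lia).
  rewrite (arg_rhp_mult_Cconj u (z n) (z (S n))) by (first [apply Hu | apply Hstep]; lia); ring.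
Qed.

Lemma winding_const (z : nat -> C) (w : C) (n : nat) :
  (forall i, z i = w) -> winding z n = 0.
Proof.
  intros Hz; induction n as [|n IH]; simpl; [reflexivity|].
  rewrite IH, !Hz, Cmult_Cconj_r; unfold arg_rhp, RtoC; simpl.
  unfold Rdiv; rewrite Rmult_0_l, atan_0; ring.
Qed.

Lemma winding_continuous (z : R -> nat -> C) (n : nat) (x : R) :
  (forall i, continuity_pt (fun a => fst (z a i)) x /\ continuity_pt (fun a => snd (z a i)) x) ->
  (forall i, (i < n)%nat -> 0 < fst (z x (S i) * Cconj (z x i))%C) ->
  continuity_pt (fun a => winding (z a) n) x.
Proof.
  intros Hz; induction n as [|n IH]; intros Hstep; simpl.
  - apply continuity_pt_const; intros ? ?; reflexivity.
  - apply continuity_pt_plus; [apply IH; intros; apply Hstep; lia|].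
    assert (Hn := Hstep n (Nat.lt_succ_diag_r n)).
    destruct (Hz n) as [H1 H2]; destruct (Hz (S n)) as [H3 H4].
    unfold arg_rhp.
    apply (continuity_pt_comp
             (fun a => snd (z a (S n) * Cconj (z a n))%C / fst (z a (S n) * Cconj (z a n))%C) atan);
      [| apply derivable_continuous_pt, derivable_pt_atan].
    simpl in Hn |- *; apply continuity_pt_div; [| | lra];
      repeat first [ assumption | apply continuity_pt_plus | apply continuity_pt_minus
                   | apply continuity_pt_mult | apply continuity_pt_opp ].
Qed.

(** * Continuity and uniform continuity on [0,1] *)

Lemma continuity_pt_eps_delta (f : R -> R) (x : R) :
  continuity_pt f x <-> forall eps, 0 < eps -> exists del, 0 < del /\
    forall y, Rabs (y - x) < del -> Rabs (f y - f x) < eps.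
Proof.
  unfold continuity_pt, continue_in, limit1_in, limit_in; simpl; unfold R_dist.
  split; intros H eps Heps; destruct (H eps Heps) as [d [Hd Hy]]; exists d; split; auto.
  - intros y Hyx; destruct (Req_dec y x) as [->|Hne].
    + rewrite Rminus_diag, Rabs_R0; exact Heps.
    + apply Hy; split; [split; [exact I | auto] | exact Hyx].
  - intros y [_ Hyx]; apply Hy, Hyx.
Qed.

Lemma cont_on_comp (F f : R -> R) (a b : R) :
  continuity F -> cont_on a b f -> cont_on a b (fun s => F (f s)).
Proof.
  intros HF Hf s Hs eps Heps.
  destruct (proj1 (continuity_pt_eps_delta F (f s)) (HF (f s)) eps Heps) as [al [Hal HFal]].
  destruct (Hf s Hs al Hal) as [d [Hd Hfd]].
  exists d; split; [exact Hd|]; intros t Ht Hts; apply HFal, Hfd; assumption.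
Qed.

Lemma deriv_on_cont_on (a b : R) (f df : R -> R) : deriv_on a b f df -> cont_on a b f.
Proof.
  intros Hd s Hs eps Heps.
  destruct (Hd s Hs 1 Rlt_0_1) as [d1 [Hd1 H1]].
  set (K := Rabs (df s) + 1).
  assert (HK : 0 < K) by (unfold K; assert (H := Rabs_pos (df s)); lra).
  exists (Rmin d1 (eps / K)); split;
    [apply Rmin_pos; [exact Hd1 | apply Rdiv_lt_0_compat; assumption]|].
  intros t Ht Hts.
  destruct (Req_dec t s) as [->|Hne]; [rewrite Rminus_diag, Rabs_R0; exact Heps|].
  assert (Hpos : 0 < Rabs (t - s)) by (apply Rabs_pos_lt; lra).
  assert (Hlt1 : Rabs (t - s) < d1) by (eapply Rlt_le_trans; [exact Hts | apply Rmin_l]).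
  assert (Hlt2 : Rabs (t - s) < eps / K) by (eapply Rlt_le_trans; [exact Hts | apply Rmin_r]).
  assert (Hquot : Rabs ((f t - f s) / (t - s)) <= K).
  { assert (Q := H1 t Ht (conj Hpos Hlt1)); unfold K.
    replace ((f t - f s) / (t - s)) with (((f t - f s) / (t - s) - df s) + df s) by ring.
    eapply Rle_trans; [apply Rabs_triang | lra]. }
  replace (f t - f s) with ((f t - f s) / (t - s) * (t - s)) by (field; lra).
  rewrite Rabs_mult.
  apply (Rle_lt_trans _ (K * Rabs (t - s)));
    [apply Rmult_le_compat_r; [apply Rabs_pos | exact Hquot]|].
  replace eps with (K * (eps / K)) by (field; lra).
  apply Rmult_lt_compat_l; assumption.
Qed.

Definition clamp01 (x : R) : R := Rmax 0 (Rmin 1 x).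

Lemma clamp01_in (x : R) : inI 0 1 (clamp01 x).
Proof. unfold inI, clamp01, Rmax, Rmin; repeat destruct Rle_dec; lra. Qed.

Lemma clamp01_id (x : R) : inI 0 1 x -> clamp01 x = x.
Proof. unfold inI, clamp01, Rmax, Rmin; repeat destruct Rle_dec; lra. Qed.

Lemma clamp01_lipschitz (x y : R) : Rabs (clamp01 x - clamp01 y) <= Rabs (x - y).
Proof.
  unfold clamp01, Rmax, Rmin; repeat destruct Rle_dec; unfold Rabs; repeat destruct Rcase_abs; lra.
Qed.

Lemma cont_on_clamp01 (f : R -> R) :
  cont_on 0 1 f -> forall x, continuity_pt (fun s => f (clamp01 s)) x.
Proof.
  intros Hf x; apply continuity_pt_eps_delta; intros eps Heps.
  destruct (Hf (clamp01 x) (clamp01_in x) eps Heps) as [d [Hd H]].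
  exists d; split; [exact Hd|]; intros y Hy.
  apply H; [apply clamp01_in | eapply Rle_lt_trans; [apply clamp01_lipschitz | exact Hy]].
Qed.

Lemma cont_on_unif01 (f : R -> R) : cont_on 0 1 f ->
  forall eps, 0 < eps -> exists del, 0 < del /\ forall x y, inI 0 1 x -> inI 0 1 y ->
    Rabs (x - y) < del -> Rabs (f x - f y) < eps.
Proof.
  intros Hf eps Heps.
  destruct (Heine (fun s => f (clamp01 s)) (fun s => 0 <= s <= 1) (compact_P3 0 1)
              (fun x _ => cont_on_clamp01 f Hf x) (mkposreal eps Heps)) as [d Hd].
  exists d; split; [apply cond_pos|]; intros x y Hx Hy Hxy.
  rewrite <- (clamp01_id x), <- (clamp01_id y) by assumption.
  apply (Hd x y Hx Hy Hxy).
Qed.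

Definition ucont01 (f : R -> C) : Prop :=
  forall eps, 0 < eps -> exists del, 0 < del /\ forall x y, inI 0 1 x -> inI 0 1 y ->
    Rabs (x - y) < del -> Cmod (f x - f y)%C < eps.

Lemma ucont01_of_cont_on (f : R -> C) :
  cont_on 0 1 (fun s => fst (f s)) -> cont_on 0 1 (fun s => snd (f s)) -> ucont01 f.
Proof.
  intros H1 H2 eps Heps.
  destruct (cont_on_unif01 _ H1 (eps / 2)) as [d1 [Hd1 U1]]; [lra|].
  destruct (cont_on_unif01 _ H2 (eps / 2)) as [d2 [Hd2 U2]]; [lra|].
  exists (Rmin d1 d2); split; [apply Rmin_pos; assumption|]; intros x y Hx Hy Hxy.
  assert (A1 := U1 x y Hx Hy (Rlt_le_trans _ _ _ Hxy (Rmin_l d1 d2))).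
  assert (A2 := U2 x y Hx Hy (Rlt_le_trans _ _ _ Hxy (Rmin_r d1 d2))).
  eapply Rle_lt_trans; [apply Cmod_le_Rabs_sum|]; simpl.
  unfold Rminus in A1, A2; lra.
Qed.

Lemma ucont01_cis (theta : R -> R) : cont_on 0 1 theta -> ucont01 (fun s => cis (theta s)).
Proof.
  intros Hth; apply ucont01_of_cont_on; apply cont_on_comp;
    auto using continuity_cos, continuity_sin.
Qed.

(** * Homotopies avoiding the origin *)

Definition ucont01_2 (P : R -> R -> C) : Prop :=
  forall eps, 0 < eps -> exists del, 0 < del /\ forall a a' t t',
    inI 0 1 a -> inI 0 1 a' -> inI 0 1 t -> inI 0 1 t' ->
    Rabs (a - a') < del -> Rabs (t - t') < del -> Cmod (P a t - P a' t')%C < eps.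

Lemma cos_eq_1_continuous_bound (f : R -> R) :
  continuity f -> (forall a, inI 0 1 a -> cos (f a) = 1) -> f 1 = 0 -> Rabs (f 0) <= PI.
Proof.
  intros Hf Hcos Hf1.
  assert (HPI := PI_RGT_0).
  assert (Hhit : forall y, Rmin (f 0) (f 1) <= y <= Rmax (f 0) (f 1) -> cos y = 1).
  { intros y Hy; destruct (IVT_gen f 0 1 y Hf Hy) as [x [Hx <-]]; apply Hcos.
    rewrite Rmin_left, Rmax_right in Hx by lra; exact Hx. }
  rewrite Hf1 in Hhit; apply Rnot_lt_le; intros Hbig.
  unfold Rabs in Hbig; destruct Rcase_abs in Hbig.
  - assert (E : cos (- PI) = 1) by (apply Hhit; rewrite Rmin_left, Rmax_right by lra; lra).
    rewrite cos_neg, cos_PI in E; lra.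
  - assert (E : cos PI = 1) by (apply Hhit; rewrite Rmin_right, Rmax_left by lra; lra).
    rewrite cos_PI in E; lra.
Qed.

Section Homotopy.

Variables (P : R -> R -> C) (Phi : R -> R).

Hypothesis P_ucont : ucont01_2 P.
Hypothesis Phi_cont : cont_on 0 1 Phi.
Hypothesis P_ends_arg : forall a, inI 0 1 a -> is_arg (P a 1 * Cconj (P a 0))%C (Phi a).
Hypothesis P_const_at_1 : forall t, inI 0 1 t -> P 1 t = P 1 0.
Hypothesis Phi_at_1 : Phi 1 = 0.
Hypothesis P_disc_at_0 : exists u, forall t, inI 0 1 t -> Cmod (P 0 t - u)%C <= Cmod u.
Hypothesis Phi_at_0 : 2 * PI <= Rabs (Phi 0).
Hypothesis P_neq0 : forall a t, inI 0 1 a -> inI 0 1 t -> P a t <> 0%C.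

(* Extending [P] constantly outside [0,1]^2 makes the sampled winding angle below continuous
   on all of R, as the intermediate value theorem requires. *)
Let Q (a t : R) : C := P (clamp01 a) (clamp01 t).

Let sample (N : nat) (a : R) (i : nat) : C := Q a (INR i / INR N).

Lemma Q_ucont : forall eps, 0 < eps -> exists del, 0 < del /\ forall a a' t t',
  Rabs (a - a') < del -> Rabs (t - t') < del -> Cmod (Q a t - Q a' t')%C < eps.
Proof.
  intros eps Heps; destruct (P_ucont eps Heps) as [d [Hd H]].
  exists d; split; [exact Hd|]; intros a a' t t' Ha Ht.
  apply H; try apply clamp01_in; eapply Rle_lt_trans; eauto using clamp01_lipschitz.
Qed.

Lemma Q_cont_l (t a0 : R) :
  continuity_pt (fun a => fst (Q a t)) a0 /\ continuity_pt (fun a => snd (Q a t)) a0.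
Proof.
  split; apply continuity_pt_eps_delta; intros eps Heps;
    destruct (Q_ucont eps Heps) as [d [Hd H]]; exists d; split; auto; intros y Hy;
    (eapply Rle_lt_trans; [| apply (H y a0 t t Hy); rewrite Rminus_diag, Rabs_R0; exact Hd]).
  - replace (fst (Q y t) - fst (Q a0 t)) with (fst (Q y t - Q a0 t)%C) by (simpl; ring).
    apply re_le_Cmod.
  - replace (snd (Q y t) - snd (Q a0 t)) with (snd (Q y t - Q a0 t)%C) by (simpl; ring).
    eapply Rle_trans; [apply Rmax_r | apply Rmax_Cmod].
Qed.

Lemma Q_lower_bound : exists m, 0 < m /\ forall a t, m <= Cmod (Q a t).
Proof.
  assert (Hcont_t : forall a t0, continuity_pt (fun t => Cmod (Q a t)) t0).
  { intros a t0; apply continuity_pt_eps_delta; intros eps Heps.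
    destruct (Q_ucont eps Heps) as [d [Hd H]]; exists d; split; [exact Hd|]; intros t Ht.
    eapply Rle_lt_trans; [apply Cmod_triangle_inv|].
    apply H; [rewrite Rminus_diag, Rabs_R0; exact Hd | exact Ht]. }
  assert (Hmin : forall a, exists t, inI 0 1 t /\
                   forall t', inI 0 1 t' -> Cmod (Q a t) <= Cmod (Q a t')).
  { intros a; destruct (continuity_ab_min (fun t => Cmod (Q a t)) 0 1) as [t [H1 H2]];
      [lra | intros; apply Hcont_t | exists t; split; assumption]. }
  destruct (choice _ Hmin) as [tm Htm].
  set (h a := Cmod (Q a (tm a))).
  assert (Hh : forall a0, continuity_pt h a0).
  { intros a0; apply continuity_pt_eps_delta; intros eps Heps.
    destruct (Q_ucont eps Heps) as [d [Hd H]]; exists d; split; [exact Hd|]; intros y Hy.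
    assert (Hdiag : Rabs (tm a0 - tm a0) < d /\ Rabs (tm y - tm y) < d)
      by (rewrite !Rminus_diag, Rabs_R0; split; exact Hd).
    destruct (Htm y) as [Iy Sy]; destruct (Htm a0) as [I0 S0].
    assert (C1 := Rle_lt_trans _ _ _ (Cmod_triangle_inv _ _) (H _ _ _ _ Hy (proj1 Hdiag))).
    assert (C2 := Rle_lt_trans _ _ _ (Cmod_triangle_inv _ _) (H _ _ _ _ Hy (proj2 Hdiag))).
    assert (A1 := Sy _ I0); assert (A2 := S0 _ Iy).
    unfold h; apply Rabs_lt_between in C1; apply Rabs_lt_between in C2.
    apply Rabs_def1; lra. }
  destruct (continuity_ab_min h 0 1) as [am [Ham _]]; [lra | intros; apply Hh|].
  exists (h am); split; [apply Cmod_gt_0, P_neq0; apply clamp01_in|].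
  intros a t.
  replace (Q a t) with (Q (clamp01 a) (clamp01 t))
    by (unfold Q; rewrite !(clamp01_id (clamp01 _)) by apply clamp01_in; reflexivity).
  eapply Rle_trans; [apply (Ham _ (clamp01_in a)) | apply (proj2 (Htm _)), clamp01_in].
Qed.

Lemma fine_sampling : exists N, (0 < N)%nat /\
  forall a i, (i < N)%nat -> 0 < fst (sample N a (S i) * Cconj (sample N a i))%C.
Proof.
  destruct Q_lower_bound as [m [Hm Hlb]].
  destruct (Q_ucont m Hm) as [del [Hdel Hclose]].
  destruct (archimed_cor1 del Hdel) as [N [HN HN0]].
  assert (HNr : 0 < INR N) by (apply lt_0_INR, HN0).
  exists N; split; [exact HN0|]; intros a i Hi.
  apply Re_mult_Cconj_pos_of_disc;
    [| apply Cmod_gt_0; eapply Rlt_le_trans; [exact Hm | apply Hlb]].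
  apply Rlt_le, Rlt_le_trans with (2 := Hlb a _), Hclose;
    [rewrite Rminus_diag, Rabs_R0; exact Hdel|].
  rewrite S_INR; replace ((INR i + 1) / INR N - INR i / INR N) with (/ INR N) by (field; lra).
  rewrite Rabs_pos_eq; [exact HN | left; apply Rinv_0_lt_compat, HNr].
Qed.

Lemma sample_ends (N : nat) (a : R) : (0 < N)%nat -> inI 0 1 a ->
  sample N a N = P a 1 /\ sample N a O = P a 0.
Proof.
  intros HN Ha; assert (HNr : 0 < INR N) by (apply lt_0_INR, HN).
  unfold sample, Q; rewrite (clamp01_id a Ha).
  replace (INR N / INR N) with 1 by (field; lra).
  replace (INR 0 / INR N) with 0 by (simpl; unfold Rdiv; ring).
  rewrite !clamp01_id by (unfold inI; lra); split; reflexivity.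
Qed.

Lemma sample_winding_at_0 (N : nat) :
  (forall i, (i < N)%nat -> 0 < fst (sample N 0 (S i) * Cconj (sample N 0 i))%C) ->
  Rabs (winding (sample N 0) N) < PI.
Proof.
  intros Hstep; destruct P_disc_at_0 as [u Hu]; rewrite (winding_in_half_plane u).
  - assert (B1 := arg_rhp_bound (sample N 0 N * Cconj u)%C).
    assert (B2 := arg_rhp_bound (sample N 0 O * Cconj u)%C).
    apply Rabs_def1; lra.
  - intros i _; unfold sample, Q; rewrite (clamp01_id 0) by (unfold inI; lra).
    apply Re_mult_Cconj_pos_of_disc; [apply Hu, clamp01_in |].
    apply P_neq0; [unfold inI; lra | apply clamp01_in].
  - exact Hstep.
Qed.

Lemma nonvanishing_homotopy_absurd : False.
Proof.
  destruct fine_sampling as [N [HN Hstep]].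
  set (D a := winding (sample N a) N).
  assert (D_arg : forall a, inI 0 1 a -> cos (D a - Phi a) = 1).
  { intros a Ha; destruct (sample_ends N a HN Ha) as [E1 E0].
    apply (is_arg_cos_diff (P a 1 * Cconj (P a 0))%C).
    - apply Cmod_gt_0; rewrite Cmod_mult, Cmod_conj.
      apply Rmult_lt_0_compat; apply Cmod_gt_0, P_neq0; unfold inI in *; lra.
    - rewrite <- E1, <- E0; apply winding_is_arg, Hstep.
    - apply P_ends_arg, Ha. }
  assert (D_at_1 : D 1 = 0).
  { apply (winding_const _ (P 1 0)); intros i; unfold sample, Q.
    rewrite clamp01_id by (unfold inI; lra); apply P_const_at_1, clamp01_in. }
  assert (D_at_0 : Rabs (D 0) < PI) by (apply sample_winding_at_0, Hstep).
  assert (Hsmall : Rabs (D 0 - Phi (clamp01 0)) <= PI).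
  { apply (cos_eq_1_continuous_bound (fun a => D a - Phi (clamp01 a))).
    - intros x; apply continuity_pt_minus; [| apply cont_on_clamp01, Phi_cont].
      apply winding_continuous; [intros i; apply Q_cont_l | intros i Hi; apply Hstep, Hi].
    - intros a Ha; rewrite clamp01_id by exact Ha; apply D_arg, Ha.
    - simpl; rewrite D_at_1, clamp01_id, Phi_at_1 by (unfold inI; lra); ring. }
  rewrite clamp01_id in Hsmall by (unfold inI; lra).
  assert (H := Rabs_triang_inv (Phi 0) (D 0)); assert (HPI := PI_RGT_0).
  rewrite <- Rabs_Ropp in Hsmall; replace (- (D 0 - Phi 0)) with (Phi 0 - D 0) in Hsmall by ring.
  lra.
Qed.

End Homotopy.

Lemma homotopy_vanishes (P : R -> R -> C) (Phi : R -> R) :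
  ucont01_2 P -> cont_on 0 1 Phi ->
  (forall a, inI 0 1 a -> is_arg (P a 1 * Cconj (P a 0))%C (Phi a)) ->
  (forall t, inI 0 1 t -> P 1 t = P 1 0) -> Phi 1 = 0 ->
  (exists u, forall t, inI 0 1 t -> Cmod (P 0 t - u)%C <= Cmod u) ->
  2 * PI <= Rabs (Phi 0) ->
  exists a t, inI 0 1 a /\ inI 0 1 t /\ P a t = 0%C.
Proof.
  intros; apply NNPP; intros Hno; apply (nonvanishing_homotopy_absurd P Phi); auto.
  intros a t Ha Ht E; apply Hno; exists a, t; auto.
Qed.

(** * The rearrangement defect *)

Definition rearr_defect (ea eb e1 ga gb g1 : C) : C :=
  (eb * ga + ea * (g1 - gb) + e1 * (gb - ga))%C.

Lemma rearr_defect_diff_bound (ea eb e1 ea' eb' ga gb g1 ga' gb' : C) (M : R) :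
  Cmod e1 = 1 -> Cmod ea' = 1 -> Cmod eb' = 1 ->
  Cmod ga <= M -> Cmod gb <= M -> Cmod g1 <= M ->
  Cmod (rearr_defect ea eb e1 ga gb g1 - rearr_defect ea' eb' e1 ga' gb' g1)%C <=
  M * Cmod (eb - eb')%C + 2 * M * Cmod (ea - ea')%C + 2 * Cmod (ga - ga')%C + 2 * Cmod (gb - gb')%C.
Proof.
  intros H1 Ha' Hb' Ga Gb G1.
  set (X1 := ((eb - eb') * ga)%C); set (X2 := (eb' * (ga - ga'))%C).
  set (X3 := ((ea - ea') * (g1 - gb))%C); set (X4 := (ea' * (gb' - gb))%C).
  set (X5 := (e1 * ((gb - gb') - (ga - ga')))%C).
  replace (rearr_defect ea eb e1 ga gb g1 - rearr_defect ea' eb' e1 ga' gb' g1)%C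
    with (X1 + X2 + X3 + X4 + X5)%C by (unfold X1, X2, X3, X4, X5, rearr_defect; ring).
  assert (T1 := Cmod_triangle (X1 + X2 + X3 + X4) X5).
  assert (T2 := Cmod_triangle (X1 + X2 + X3) X4).
  assert (T3 := Cmod_triangle (X1 + X2) X3).
  assert (T4 := Cmod_triangle X1 X2).
  assert (B1 : Cmod X1 <= M * Cmod (eb - eb')%C).
  { unfold X1; rewrite Cmod_mult, Rmult_comm.
    apply Rmult_le_compat_r; [apply Cmod_ge_0 | exact Ga]. }
  assert (B2 : Cmod X2 = Cmod (ga - ga')%C) by (unfold X2; rewrite Cmod_mult, Hb'; ring).
  assert (B3 : Cmod X3 <= 2 * M * Cmod (ea - ea')%C).
  { unfold X3; rewrite Cmod_mult, (Rmult_comm (2 * M)); apply Rmult_le_compat_l; [apply Cmod_ge_0|].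
    assert (T := Cmod_triangle g1 (- gb)%C); rewrite Cmod_opp in T; unfold Cminus; lra. }
  assert (B4 : Cmod X4 = Cmod (gb - gb')%C).
  { unfold X4; rewrite Cmod_mult, Ha', Rmult_1_l, <- Cmod_opp; f_equal; ring. }
  assert (B5 : Cmod X5 <= Cmod (gb - gb')%C + Cmod (ga - ga')%C).
  { unfold X5; rewrite Cmod_mult, H1, Rmult_1_l.
    assert (T := Cmod_triangle (gb - gb')%C (- (ga - ga'))%C); rewrite Cmod_opp in T.
    unfold Cminus at 1; lra. }
  lra.
Qed.

Lemma interp_lipschitz (a a' t t' : R) : inI 0 1 a' -> inI 0 1 t ->
  Rabs ((a + t * (1 - a)) - (a' + t' * (1 - a'))) <= Rabs (a - a') + Rabs (t - t').
Proof.
  unfold inI; intros Ha' Ht.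
  replace ((a + t * (1 - a)) - (a' + t' * (1 - a'))) with ((a - a') * (1 - t) + (t - t') * (1 - a'))
    by ring.
  eapply Rle_trans; [apply Rabs_triang|]; rewrite !Rabs_mult.
  rewrite (Rabs_pos_eq (1 - t)), (Rabs_pos_eq (1 - a')) by lra.
  assert (H3 := Rabs_pos (a - a')); assert (H4 := Rabs_pos (t - t')); nra.
Qed.

Lemma rearr_defect_homotopy_ucont (e g : R -> C) (M : R) :
  ucont01 e -> ucont01 g ->
  (forall s, inI 0 1 s -> Cmod (e s) = 1) -> (forall s, inI 0 1 s -> Cmod (g s) <= M) ->
  ucont01_2 (fun a t => let b := a + t * (1 - a) in
                        rearr_defect (e a) (e b) (e 1) (g a) (g b) (g 1)).
Proof.
  intros He Hg He1 HgM eps Heps.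
  assert (HM : 0 <= M) by (eapply Rle_trans; [apply Cmod_ge_0 | apply (HgM 0); unfold inI; lra]).
  set (eta := eps / (3 * M + 5)).
  assert (Heta : 0 < eta) by (apply Rdiv_lt_0_compat; lra).
  destruct (He eta Heta) as [d1 [Hd1 U1]]; destruct (Hg eta Heta) as [d2 [Hd2 U2]].
  assert (Hd0 := Rmin_pos _ _ Hd1 Hd2).
  exists (Rmin d1 d2 / 2); split; [lra|].
  intros a a' t t' Ha Ha' Ht Ht' Haa Htt; simpl.
  assert (Hin : forall x y, inI 0 1 x -> inI 0 1 y -> inI 0 1 (x + y * (1 - x))).
  { unfold inI; intros x y Hx Hy; split; nra. }
  assert (Hd : Rmin d1 d2 <= d1 /\ Rmin d1 d2 <= d2) by (split; [apply Rmin_l | apply Rmin_r]).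
  assert (Hbb := interp_lipschitz a a' t t' Ha' Ht).
  assert (Hb : Rabs ((a + t * (1 - a)) - (a' + t' * (1 - a'))) < Rmin d1 d2) by lra.
  assert (Ha2 : Rabs (a - a') < Rmin d1 d2) by lra.
  assert (X1 := U1 _ _ (Hin a t Ha Ht) (Hin a' t' Ha' Ht') ltac:(lra)).
  assert (X2 := U1 _ _ Ha Ha' ltac:(lra)).
  assert (X3 := U2 _ _ Ha Ha' ltac:(lra)).
  assert (X4 := U2 _ _ (Hin a t Ha Ht) (Hin a' t' Ha' Ht') ltac:(lra)).
  eapply Rle_lt_trans.
  { apply (rearr_defect_diff_bound _ _ _ _ _ _ _ _ _ _ M);
      first [apply He1 | apply HgM]; auto; unfold inI; lra. }
  assert (M * Cmod (e (a + t * (1 - a))%R - e (a' + t' * (1 - a'))%R)%C <= M * eta)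
    by (apply Rmult_le_compat_l; lra).
  assert (M * Cmod (e a - e a')%C <= M * eta) by (apply Rmult_le_compat_l; lra).
  replace eps with ((3 * M + 5) * eta) by (unfold eta; field; lra).
  lra.
Qed.

Lemma rearr_defect_vanishes (theta : R -> R) (g : R -> C) (M : R) :
  cont_on 0 1 theta -> ucont01 g -> (forall s, inI 0 1 s -> Cmod (g s) <= M) -> g 0 = 0%C ->
  (exists k, theta 0 = 2 * PI * IZR k) -> 2 * PI <= Rabs (theta 1 - theta 0) ->
  sqrt (2 * (1 - cos (theta 1))) * M <= Cmod (g 1) ->
  exists a b, 0 <= a <= b /\ b <= 1 /\
    rearr_defect (cis (theta a)) (cis (theta b)) (cis (theta 1)) (g a) (g b) (g 1) = 0%C.
Proof.
  intros Hth Hg HgM Hg0 [k Hk] Hturn Hlong.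
  set (e s := cis (theta s)).
  destruct (classic (g 1 = 0%C)) as [G1|G1].
  { exists 0, 0; split; [lra | split; [lra|]]; unfold rearr_defect; rewrite G1; ring. }
  assert (HM : 0 <= M) by (eapply Rle_trans; [apply Cmod_ge_0 | apply (HgM 0); unfold inI; lra]).
  destruct (homotopy_vanishes
              (fun a t => let b := a + t * (1 - a) in
                          rearr_defect (e a) (e b) (e 1) (g a) (g b) (g 1))
              (fun a => theta 1 - theta a)) as [a [t [Ha [Ht Hz]]]].
  - apply rearr_defect_homotopy_ucont with M;
      [apply ucont01_cis, Hth | exact Hg | intros; apply Cmod_cis | exact HgM].
  - apply (cont_on_comp (fun x => theta 1 - x)); [| exact Hth].
    intros x; apply continuity_pt_minus;
      [apply continuity_pt_const; intros ? ?; reflexivity | apply continuity_pt_id].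
  - intros a Ha; simpl.
    replace (a + 1 * (1 - a)) with 1 by ring; replace (a + 0 * (1 - a)) with a by ring.
    replace (rearr_defect (e a) (e 1) (e 1) (g a) (g 1) (g 1)) with (e 1 * g 1)%C
      by (unfold rearr_defect; ring).
    replace (rearr_defect (e a) (e a) (e 1) (g a) (g a) (g 1)) with (e a * g 1)%C
      by (unfold rearr_defect; ring).
    replace (e 1 * g 1 * Cconj (e a * g 1))%C
      with (RtoC (Cmod (g 1) * Cmod (g 1)) * (e 1 * Cconj (e a)))%C
      by (rewrite <- Cmult_Cconj_r, Cmult_conj; ring).
    assert (0 < Cmod (g 1)) by (apply Cmod_gt_0, G1).
    apply is_arg_scal_pos; [nra|].
    replace (theta 1 - theta a) with (theta 1 + - theta a) by ring.
    apply is_arg_mult, is_arg_conj; apply is_arg_cis.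
  - intros t Ht; simpl; replace (1 + t * (1 - 1)) with 1 by ring.
    replace (1 + 0 * (1 - 1)) with 1 by ring; reflexivity.
  - ring.
  - exists (g 1); intros t Ht; simpl; replace (0 + t * (1 - 0)) with t by ring.
    assert (He0 : e 0 = 1%C) by (unfold e; rewrite Hk; apply cis_2PI_mult).
    replace (rearr_defect (e 0) (e t) (e 1) (g 0) (g t) (g 1) - g 1)%C
      with (- ((1 - e 1) * g t))%C by (unfold rearr_defect; rewrite He0, Hg0; ring).
    rewrite Cmod_opp, Cmod_mult; unfold e; rewrite Cmod_1_minus_cis.
    eapply Rle_trans; [| exact Hlong].
    apply Rmult_le_compat_l; [apply sqrt_pos | apply HgM, Ht].
  - lra.
  - exists a, (a + t * (1 - a)); unfold inI in *; split; [nra | split; [nra | exact Hz]].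
Qed.

(** * Rearranged curves *)

Lemma vscale_Cmult (k : R) (p : vec) : vscale k p = (RtoC k * p)%C.
Proof. destruct p; unfold vscale, Cmult, RtoC; simpl; f_equal; ring. Qed.

Lemma rot_Cmult (u v x : vec) : rot u v x = (v * Cconj u * x)%C.
Proof. destruct u, v, x; unfold rot, Cmult, Cconj; simpl; f_equal; ring. Qed.

Lemma vscale_rot (k : R) (u v x : vec) : vscale k (rot u v x) = rot u v (vscale k x).
Proof. destruct u, v, x; unfold vscale, rot; simpl; f_equal; ring. Qed.

Lemma concat_apos_end (c : R) (al be : arc) (s : R) :
  lo al <= hi al -> lo be <= hi be -> s = hi al - lo al + (hi be - lo be) ->
  apos (concat c al be) s =
  vadd (apos al (hi al))
       (rot (vscale (/ c) (atan_ be (lo be))) (vscale (/ c) (atan_ al (hi al)))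
            (vsub (apos be (hi be)) (apos be (lo be)))).
Proof.
  intros Hal Hbe ->; unfold concat; simpl; destruct Rle_dec as [Hle|Hgt].
  - replace (hi be) with (lo be) by lra.
    replace (hi al - lo al + (lo be - lo be) + lo al) with (hi al) by ring.
    destruct (apos al (hi al)), (apos be (lo be)); unfold vadd, vsub, rot; simpl; f_equal; ring.
  - replace (hi al - lo al + (hi be - lo be) - (hi al - lo al) + lo be) with (hi be) by ring.
    reflexivity.
Qed.

Lemma concat_atan_end (c : R) (al be : arc) (s : R) :
  0 < c -> lo al <= hi al -> lo be <= hi be -> Cmod (atan_ be (lo be)) = c ->
  s = hi al - lo al + (hi be - lo be) ->
  atan_ (concat c al be) s =
  rot (vscale (/ c) (atan_ be (lo be))) (vscale (/ c) (atan_ al (hi al))) (atan_ be (hi be)).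
Proof.
  intros Hc Hal Hbe Hspeed ->; unfold concat; simpl; destruct Rle_dec as [Hle|Hgt].
  - replace (hi be) with (lo be) by lra.
    replace (hi al - lo al + (lo be - lo be) + lo al) with (hi al) by ring.
    rewrite rot_Cmult, !vscale_Cmult, Cmult_conj.
    replace (Cconj (RtoC (/ c))) with (RtoC (/ c)) by (unfold Cconj, RtoC; simpl; f_equal; ring).
    set (w := atan_ be (lo be)) in *; set (x := atan_ al (hi al)).
    replace (RtoC (/ c) * x * (RtoC (/ c) * Cconj w) * w)%C
      with (RtoC (/ c * / c * (Cmod w * Cmod w)) * x)%C
      by (rewrite (RtoC_mult (/ c * / c)), (RtoC_mult (/ c)), <- Cmult_Cconj_r; ring).
    rewrite Hspeed; replace (/ c * / c * (c * c)) with 1 by (field; lra).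
    symmetry; apply Cmult_1_l.
  - replace (hi al - lo al + (hi be - lo be) - (hi al - lo al) + lo be) with (hi be) by ring.
    reflexivity.
Qed.

Lemma rearranged_start (c : R) (g dg : R -> vec) (a b : R) :
  0 <= a <= b -> b <= 1 -> apos (rearranged c g dg a b) 0 = g 0.
Proof.
  intros Hab Hb; unfold rearranged, concat, restr; simpl.
  destruct Rle_dec; [|lra]; destruct Rle_dec; [|lra].
  f_equal; ring.
Qed.

Lemma rearranged_end (c : R) (g dg : R -> vec) (theta : R -> R) (a b : R) :
  0 < c -> (forall s, inI 0 1 s -> dg s = (c * cos (theta s), c * sin (theta s))) ->
  0 <= a <= b -> b <= 1 ->
  (apos (rearranged c g dg a b) 1 : C) =
  (Cconj (cis (theta b)) *
   rearr_defect (cis (theta a)) (cis (theta b)) (cis (theta 1)) (g a) (g b) (g 1))%C.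
Proof.
  intros Hc Hdg Hab Hb.
  assert (Hdgc : forall s, inI 0 1 s -> dg s = (RtoC c * cis (theta s))%C).
  { intros s Hs; rewrite Hdg by exact Hs; unfold cis, Cmult, RtoC; simpl; f_equal; ring. }
  assert (Hunit : forall s, inI 0 1 s -> vscale (/ c) (dg s) = cis (theta s)).
  { intros s Hs; rewrite vscale_Cmult, Hdgc, Cmult_assoc, <- RtoC_mult, Rinv_l by (exact Hs || lra).
    apply Cmult_1_l. }
  assert (Hspeed : Cmod (dg b) = c).
  { rewrite Hdgc, Cmod_mult, Cmod_cis, Cmod_RtoC_pos by (unfold inI; lra); ring. }
  unfold rearranged.
  rewrite (concat_apos_end _ _ _ 1) by (simpl; lra).
  change (hi (concat c (restr g dg 0 a) (restr g dg b 1))) with (a - 0 + (1 - b)).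
  rewrite (concat_apos_end _ _ _ (a - 0 + (1 - b))) by (simpl; lra).
  rewrite (concat_atan_end _ _ _ (a - 0 + (1 - b))) by (simpl; lra).
  simpl; rewrite vscale_rot, !Hunit by (unfold inI; lra).
  rewrite !rot_Cmult; change vadd with Cplus; change vsub with Cminus.
  set (ea := cis (theta a)); set (eb := cis (theta b)); set (e1 := cis (theta 1)).
  assert (Ua : (ea * Cconj ea)%C = 1%C) by apply cis_Cconj_r.
  assert (Ub : (eb * Cconj eb)%C = 1%C) by apply cis_Cconj_r.
  (* the two sides differ by multiples of [1 - eb * conj eb] and [ea * conj ea - 1] *)
  transitivity (Cconj eb * rearr_defect ea eb e1 (g a) (g b) (g 1)
                + (1 - eb * Cconj eb) * g a
                + (ea * Cconj ea - 1) * (e1 * Cconj eb * (g b - g a)))%C.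
  - unfold rearr_defect; ring.
  - rewrite Ua, Ub; ring.
Qed.

Lemma vnorm_Cmod (p : vec) : vnorm p = Cmod p.
Proof. destruct p; unfold vnorm; rewrite Cmod_pair; reflexivity. Qed.

Theorem lemma3p2 (g dg : R -> R * R) (theta : R -> R) (c M : R) :
  0 < c ->
  C1_curve_on 0 1 g dg ->
  (forall s, inI 0 1 s -> vnorm (dg s) = c) ->
  g 0 = (0, 0) ->
  dg 0 = (c, 0) ->
  turning_angle 0 1 c dg theta ->
  (exists k : Z, theta 0 = 2 * PI * IZR k) ->
  Rabs (theta 1 - theta 0) >= 2 * PI ->
  (* M = max_{s in [0,1]} ||gamma(s)|| *)
  (forall s, inI 0 1 s -> vnorm (g s) <= M) ->
  (exists s0, inI 0 1 s0 /\ vnorm (g s0) = M) ->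
  vnorm (g 1) >= sqrt (2 * (1 - cos (theta 1))) * M ->
  exists c1 c2, 0 <= c1 <= c2 /\ c2 <= 1 /\
    apos (rearranged c g dg c1 c2) 0 = apos (rearranged c g dg c1 c2) 1.
Proof.
  intros Hc [Hg1 [Hg2 _]] _ Hg0 _ [Hth Hdg] Hk Hturn HM _ Hlong.
  destruct (rearr_defect_vanishes theta g M Hth) as [a [b [Hab [Hb Hzero]]]].
  - apply ucont01_of_cont_on; eapply deriv_on_cont_on; eassumption.
  - intros s Hs; rewrite <- vnorm_Cmod; apply HM, Hs.
  - exact Hg0.
  - exact Hk.
  - lra.
  - rewrite <- vnorm_Cmod; lra.
  - exists a, b; split; [exact Hab | split; [exact Hb |]].
    rewrite rearranged_start, (rearranged_end c g dg theta a b), Hzero, Hg0 by assumption.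
    rewrite Cmult_0_r; reflexivity.
Qed.
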